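(* Consider wealth dynamics without a wealth tax, $\mathrm{d} w_{it} = \mu(w_{it})\,\mathrm{d} t + \sigma(w_{it})\,\mathrm{d} B_{it}$, and with a (nonlinear) wealth tax $\tau(w)$ and no behavioral responses, $\mathrm{d} w_{it} = (\mu(w_{it}) - \tau(w_{it}))\,\mathrm{d} t + \sigma(w_{it})\,\mathrm{d} B_{it}$, where $B_{it}$ is a standard Brownian motion. Let $f$ be the steady-state density of wealth without the wealth tax and $f^*$ the steady-state density with the wealth tax. Then $f^*$ equals $f$ reweighted by a factor $\theta(w)$: $$f^*(w) \propto \theta(w) f(w), \qquad \theta(w) = \exp\left\{-\int_{-\infty}^w \frac{2\tau(s)}{\sigma^2(s)}\,\mathrm{d} s\right\}.$$ In particular, if $\tau(w) = \tau\,(w-w_0)_+$ for a constant rate $\tau$ and threshold $w_0>0$ (where $(x)_+=\max(x,0)$), and if $\sigma(w) = \sigma w$ for $w \ge w_0$ with a constant $\sigma>0$, then $$\theta(w)=\exp\left\{-\frac{2\tau}{\sigma^2}\left(\frac{w_0}{w}-1\right)\right\}\left(\frac{w}{w_0}\right)^{-2\tau/\sigma^2} \quad \text{for all } w>w_0,$$ and $\theta(w) = 1$ otherwise.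
   Context: Here $\tau(w)$ denotes the amount of tax paid per unit of time by someone with wealth $w$, $\mu(w)$ the (time-invariant) drift and $\sigma^2(w)$ the (time-invariant) diffusion of wealth. A steady-state density is a probability density $f$ that is a stationary solution of the Kolmogorov forward equation associated with the SDE, i.e. $0 = -\partial_w[\text{drift}(w) f(w)] + \tfrac12 \partial_w^2[\sigma^2(w) f(w)]$. The symbol $\propto$ means equality up to a positive normalizing constant. *)

From Stdlib Require Import Reals.
From Coquelicot Require Import Coquelicot.
Open Scope R_scope.

Definition prob_density (f : R -> R) : Prop :=
  (forall w, 0 <= f w) /\
  is_RInt_gen f (Rbar_locally m_infty) (Rbar_locally p_infty) 1.

(* Stationary Kolmogorov forward equation for dw = drift(w) dt + sig(w) dB:
   0 = - d/dw [drift f] + 1/2 d^2/dw^2 [sig^2 f], required at every w. *)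
Definition stationary_KFE (drift sig f : R -> R) : Prop :=
  (forall w, ex_derive (fun x => drift x * f x) w) /\
  (forall w, ex_derive (fun x => sig x ^ 2 * f x) w) /\
  (forall w, ex_derive (Derive (fun x => sig x ^ 2 * f x)) w) /\
  (forall w, 0 = - Derive (fun x => drift x * f x) w
                 + / 2 * Derive_n (fun x => sig x ^ 2 * f x) 2 w).

Definition steady_state_density (drift sig f : R -> R) : Prop :=
  prob_density f /\ stationary_KFE drift sig f.

(* Probability flux J(w) = - drift f + 1/2 (sig^2 f)'; the stationary KFE says J' = 0. *)
Definition flux (drift sig f : R -> R) (w : R) : R :=
  - drift w * f w + / 2 * Derive (fun x => sig x ^ 2 * f x) w.

Definition no_flux_at_minus_infty (drift sig f : R -> R) : Prop :=
  is_lim (flux drift sig f) m_infty 0.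

Definition theta (tau sig : R -> R) (w : R) : R :=
  exp (- RInt_gen (fun s => 2 * tau s / sig s ^ 2) (Rbar_locally m_infty) (at_point w)).

(* With zero flux at -oo the stationary forward equation integrates once to
   (sig^2 f)' = (2 drift / sig^2) (sig^2 f), so every steady-state density is
   f(w) = C exp(int_0^w 2 drift / sig^2) / sig(w)^2 with C > 0 forced by the
   normalisation.  The tax enters only through the drift, so the two densities
   differ by the factor exp(- int_0^w 2 tau / sig^2), which is theta up to the
   constant theta(0).  For the linear tax the integrand vanishes below w0 and
   equals (2 tau0 / sig0^2) (1/s - w0/s^2) above it, with primitive
   (2 tau0 / sig0^2) (ln s + w0/s). *)
From Stdlib Require Import Reals Lra FunctionalExtensionality.
From Coquelicot Require Import Coquelicot.
Open Scope R_scope.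

Definition drift_ratio (d sig : R -> R) (s : R) : R := 2 * d s / sig s ^ 2.

Lemma continuous_drift_ratio (d sig : R -> R) (w : R) :
  continuous d w -> continuous sig w -> sig w <> 0 ->
  continuous (drift_ratio d sig) w.
Proof.
  intros Hd Hsig Hsig0.
  apply (continuous_ext (fun s => 2 * d s * / (sig s * sig s))).
  { intro s; unfold drift_ratio, Rdiv; simpl; rewrite Rmult_1_r; reflexivity. }
  apply (continuous_mult (K := R_AbsRing)).
  - apply (continuous_mult (K := R_AbsRing)); [apply continuous_const | exact Hd].
  - apply continuous_Rinv_comp; [apply (continuous_mult (K := R_AbsRing)); exact Hsig|].
    now apply Rmult_integral_contrapositive.
Qed.

Lemma is_derive_0_const (h : R -> R) :
  (forall x, is_derive h x 0) -> forall w, h w = h 0.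
Proof.
  intros Hh w.
  assert (FTC : is_RInt (fun _ => 0) 0 w (minus (h w) (h 0))).
  { apply (is_RInt_derive h); [intros x _; apply Hh | intros x _; apply continuous_const]. }
  assert (Hconst : is_RInt (fun _ => 0) 0 w (scal (w - 0) 0)) by exact (is_RInt_const 0 w 0).
  pose proof (@is_RInt_unique R_CompleteNormedModule _ _ _ _ FTC) as E1.
  pose proof (@is_RInt_unique R_CompleteNormedModule _ _ _ _ Hconst) as E2.
  rewrite E1 in E2; change (h w - h 0 = (w - 0) * 0) in E2; lra.
Qed.

Lemma is_derive_RInt_0 (a : R -> R) (x : R) :
  (forall s, continuous a s) -> is_derive (fun y => RInt a 0 y) x (a x).
Proof.
  intros Ha; apply (is_derive_RInt a _ 0); [|apply Ha].
  apply filter_forall; intro y.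
  apply (@RInt_correct R_CompleteNormedModule), (@ex_RInt_continuous R_CompleteNormedModule).
  intros; apply Ha.
Qed.

(* g exp(- int_0 a) has derivative 0. *)
Lemma linear_ode_solution (a g : R -> R) :
  (forall x, continuous a x) -> (forall x, is_derive g x (a x * g x)) ->
  forall w, g w = g 0 * exp (RInt a 0 w).
Proof.
  intros Ha Hg w.
  set (h := fun y => g y * exp (- RInt a 0 y)).
  assert (Hh : forall x, is_derive h x 0).
  { intro x.
    assert (Hexp : is_derive (fun y => exp (- RInt a 0 y)) x
                     (- a x * exp (- RInt a 0 x))).
    { apply (is_derive_comp exp (fun y => - RInt a 0 y)).
      - apply is_derive_Reals, derivable_pt_lim_exp.
      - apply (is_derive_opp (fun y => RInt a 0 y)), is_derive_RInt_0, Ha. }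
    replace 0 with (a x * g x * exp (- RInt a 0 x) + g x * (- a x * exp (- RInt a 0 x)))
      by ring.
    exact (is_derive_mult g _ x _ _ (Hg x) Hexp (fun _ _ => Rmult_comm _ _)). }
  pose proof (is_derive_0_const h Hh w) as E; unfold h in E.
  rewrite RInt_point in E; change (g w * exp (- RInt a 0 w) = g 0 * exp (- 0)) in E.
  rewrite Ropp_0, exp_0, Rmult_1_r in E; rewrite <- E, Rmult_assoc, <- exp_plus.
  replace (- RInt a 0 w + RInt a 0 w) with 0 by ring; rewrite exp_0; ring.
Qed.

Lemma is_RInt_gen_0 (Fa Fb : (R -> Prop) -> Prop) {FFa : Filter Fa} {FFb : Filter Fb} :
  is_RInt_gen (fun _ => 0) Fa Fb 0.
Proof.
  assert (H : is_RInt_gen (Derive (fun _ => 0)) Fa Fb (0 - 0)).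
  { apply is_RInt_gen_Derive; try apply filterlim_const;
      apply filter_forall; intros ab x _.
    - apply ex_derive_const.
    - apply (continuous_ext (fun _ => 0)); [intro; now rewrite Derive_const|].
      apply continuous_const. }
  rewrite Rminus_0_r in H; revert H; apply is_RInt_gen_ext.
  apply filter_forall; intros ab x _; apply Derive_const.
Qed.

Lemma is_RInt_gen_vanishing_left (g : R -> R) (w : R) :
  (forall s, s < w -> g s = 0) ->
  is_RInt_gen g (Rbar_locally m_infty) (at_point w) 0.
Proof.
  intros Hg; refine (is_RInt_gen_ext (fun _ => 0) g 0 _ (is_RInt_gen_0 _ _)).
  apply (Filter_prod _ _ _ (fun a => a < w) (fun b => b = w)); [now exists w | reflexivity|].
  intros a b Ha -> x Hx; simpl in Hx.
  rewrite Rmin_left, Rmax_right in Hx by lra.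
  symmetry; apply Hg; lra.
Qed.

Lemma prob_density_not_0 (f : R -> R) : prob_density f -> ~ (forall w, f w = 0).
Proof.
  intros [_ Hint] Hf0.
  replace f with (fun _ : R => 0) in Hint by (apply functional_extensionality; auto).
  assert (E := is_RInt_gen_unique _ _
                 (is_RInt_gen_0 (Rbar_locally m_infty) (Rbar_locally p_infty))).
  rewrite (is_RInt_gen_unique _ _ Hint) in E; lra.
Qed.

Lemma stationary_KFE_is_derive_flux (d sig f : R -> R) (x : R) :
  stationary_KFE d sig f -> is_derive (flux d sig f) x 0.
Proof.
  intros (Hd1 & _ & Hd2 & Hkfe).
  assert (D := is_derive_plus _ _ x _ _
                 (is_derive_opp _ x _ (Derive_correct _ _ (Hd1 x)))
                 (is_derive_scal _ x (/ 2) _ (Derive_correct _ _ (Hd2 x)))).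
  rewrite (Hkfe x); revert D; apply is_derive_ext.
  intro t; unfold flux, plus, opp, scal; simpl; unfold mult; simpl; ring.
Qed.

Lemma flux_eq_0 (d sig f : R -> R) (x : R) :
  stationary_KFE d sig f -> no_flux_at_minus_infty d sig f -> flux d sig f x = 0.
Proof.
  intros Hkfe Hflux.
  assert (Hconst :=
            is_derive_0_const _ (fun y => stationary_KFE_is_derive_flux d sig f y Hkfe)).
  apply is_lim_ext with (g := fun _ => flux d sig f 0) in Hflux; [|exact Hconst].
  rewrite Hconst; apply is_lim_unique in Hflux; rewrite Lim_const in Hflux.
  now injection Hflux.
Qed.

Lemma is_derive_diffusion_density (d sig f : R -> R) (x : R) :
  sig x <> 0 -> stationary_KFE d sig f -> no_flux_at_minus_infty d sig f ->
  is_derive (fun y => sig y ^ 2 * f y) x (drift_ratio d sig x * (sig x ^ 2 * f x)).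
Proof.
  intros Hsig Hkfe Hflux.
  assert (E := flux_eq_0 d sig f x Hkfe Hflux); unfold flux in E.
  replace (drift_ratio d sig x * (sig x ^ 2 * f x)) with (2 * d x * f x)
    by (unfold drift_ratio; field; exact Hsig).
  replace (2 * d x * f x) with (Derive (fun y => sig y ^ 2 * f y) x) by lra.
  apply Derive_correct, Hkfe.
Qed.

Section SteadyState.

Variables d sig f : R -> R.
Hypothesis d_cont : forall w, continuous d w.
Hypothesis sig_cont : forall w, continuous sig w.
Hypothesis sig_neq0 : forall w, sig w <> 0.
Hypothesis f_steady : steady_state_density d sig f.
Hypothesis f_no_flux : no_flux_at_minus_infty d sig f.

Lemma steady_state_density_formula (w : R) :
  sig w ^ 2 * f w = sig 0 ^ 2 * f 0 * exp (RInt (drift_ratio d sig) 0 w).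
Proof.
  apply (linear_ode_solution _ (fun y => sig y ^ 2 * f y)).
  - intro x; apply continuous_drift_ratio; auto.
  - intro x; apply is_derive_diffusion_density; [auto | apply f_steady | exact f_no_flux].
Qed.

Lemma steady_state_density_pos_at_0 : 0 < sig 0 ^ 2 * f 0.
Proof.
  destruct f_steady as [Hdens _].
  assert (Hge : 0 <= sig 0 ^ 2 * f 0) by (apply Rmult_le_pos; [apply pow2_ge_0 | apply Hdens]).
  destruct Hge as [Hlt | Heq]; [exact Hlt|].
  exfalso; apply (prob_density_not_0 f Hdens); intro w.
  assert (Hsig2 : sig w ^ 2 <> 0) by now apply pow_nonzero.
  assert (E := steady_state_density_formula w); rewrite <- Heq, Rmult_0_l in E.
  destruct (Rmult_integral _ _ E); [contradiction | assumption].
Qed.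

End SteadyState.

Lemma theta_Chasles (tau sig : R -> R) (w : R) :
  ex_RInt_gen (drift_ratio tau sig) (Rbar_locally m_infty) (at_point 0) ->
  ex_RInt (drift_ratio tau sig) 0 w ->
  theta tau sig w = theta tau sig 0 * exp (- RInt (drift_ratio tau sig) 0 w).
Proof.
  intros Hgen Hint; unfold theta; fold (drift_ratio tau sig).
  assert (Hint' := proj2 (ex_RInt_gen_at_point _ _ _) Hint).
  rewrite <- (RInt_gen_Chasles (V := R_CompleteNormedModule) (Fa := Rbar_locally m_infty)
                _ 0 Hgen Hint'), (RInt_gen_at_point _ _ _ Hint).
  change (plus ?u ?v) with (u + v); rewrite Ropp_plus_distr, exp_plus; reflexivity.
Qed.

Lemma RInt_drift_ratio_minus (mu tau sig : R -> R) (a b : R) :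
  (forall s, sig s <> 0) ->
  ex_RInt (drift_ratio mu sig) a b -> ex_RInt (drift_ratio tau sig) a b ->
  RInt (drift_ratio (fun s => mu s - tau s) sig) a b =
  RInt (drift_ratio mu sig) a b - RInt (drift_ratio tau sig) a b.
Proof.
  intros Hsig Hmu Htau.
  etransitivity; [|exact (RInt_minus _ _ _ _ Hmu Htau)].
  apply RInt_ext; intros x _; unfold drift_ratio, minus, plus, opp; simpl.
  field; apply Hsig.
Qed.

Lemma steady_state_density_reweighting (mu sigma tau f fstar : R -> R) :
  (forall w, continuous mu w) ->
  (forall w, continuous sigma w) ->
  (forall w, continuous tau w) ->
  (forall w, sigma w <> 0) ->
  ex_RInt_gen (drift_ratio tau sigma) (Rbar_locally m_infty) (at_point 0) ->
  steady_state_density mu sigma f ->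
  no_flux_at_minus_infty mu sigma f ->
  steady_state_density (fun w => mu w - tau w) sigma fstar ->
  no_flux_at_minus_infty (fun w => mu w - tau w) sigma fstar ->
  exists c : R, 0 < c /\ forall w, fstar w = c * (theta tau sigma w * f w).
Proof.
  intros Hmu Hsig Htau Hsig0 Hgen Hf Hf_flux Hfstar Hfstar_flux.
  assert (Hmu_tau : forall w, continuous (fun w => mu w - tau w) w)
    by (intro w; apply (continuous_minus (V := R_NormedModule)); auto).
  assert (ex_RInt_ratio : forall d w,
            (forall s, continuous d s) -> ex_RInt (drift_ratio d sigma) 0 w)
    by (intros d w Hd; apply (@ex_RInt_continuous R_CompleteNormedModule);
        intros; apply continuous_drift_ratio; auto).
  assert (Hpos := steady_state_density_pos_at_0 _ _ _ Hmu Hsig Hsig0 Hf Hf_flux).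
  assert (Hpos_star :=
            steady_state_density_pos_at_0 _ _ _ Hmu_tau Hsig Hsig0 Hfstar Hfstar_flux).
  assert (Htheta0 : 0 < theta tau sigma 0) by apply exp_pos.
  exists (sigma 0 ^ 2 * fstar 0 / (sigma 0 ^ 2 * f 0) / theta tau sigma 0); split.
  { apply Rdiv_lt_0_compat; [apply Rdiv_lt_0_compat|]; assumption. }
  intro w.
  assert (Hsig2 : sigma w ^ 2 <> 0) by now apply pow_nonzero.
  assert (Ef := steady_state_density_formula _ _ _ Hmu Hsig Hsig0 Hf Hf_flux w).
  assert (Efstar :=
            steady_state_density_formula _ _ _ Hmu_tau Hsig Hsig0 Hfstar Hfstar_flux w).
  rewrite RInt_drift_ratio_minus in Efstar by auto.
  rewrite (theta_Chasles _ _ w Hgen (ex_RInt_ratio _ _ Htau)).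
  set (Itau := RInt (drift_ratio tau sigma) 0 w) in *.
  set (Cf := sigma 0 ^ 2 * f 0) in *; set (Cfstar := sigma 0 ^ 2 * fstar 0) in *.
  apply (Rmult_eq_reg_l (sigma w ^ 2)); [|exact Hsig2].
  transitivity (Cfstar / Cf * exp (- Itau) * (sigma w ^ 2 * f w)).
  - rewrite Efstar, Ef; unfold Rminus; rewrite exp_plus.
    field; apply Rgt_not_eq; assumption.
  - field; split; apply Rgt_not_eq; assumption.
Qed.

Section LinearTax.

Variables (tau0 w0 sigma0 : R) (tau sigma : R -> R).
Hypothesis w0_pos : 0 < w0.
Hypothesis sigma0_pos : 0 < sigma0.
Hypothesis tau_linear : forall w, tau w = tau0 * Rmax (w - w0) 0.
Hypothesis sigma_linear : forall w, w0 <= w -> sigma w = sigma0 * w.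

Let k := 2 * tau0 / sigma0 ^ 2.

Lemma is_RInt_gen_linear_tax_below (w : R) :
  w <= w0 -> is_RInt_gen (drift_ratio tau sigma) (Rbar_locally m_infty) (at_point w) 0.
Proof.
  intros Hw; apply is_RInt_gen_vanishing_left; intros s Hs.
  unfold drift_ratio; rewrite tau_linear, Rmax_right by lra.
  unfold Rdiv; ring.
Qed.

Lemma is_RInt_linear_tax_above (w : R) :
  w0 < w ->
  is_RInt (drift_ratio tau sigma) w0 w (k * (ln w + w0 / w) - k * (ln w0 + 1)).
Proof.
  intros Hw.
  apply (is_RInt_ext (fun s => k * (/ s - w0 / s ^ 2))).
  { intros s Hs; rewrite Rmin_left, Rmax_right in Hs by lra.
    change (k * (/ s - w0 / s ^ 2) = drift_ratio tau sigma s :> R).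
    unfold drift_ratio, k; rewrite tau_linear, sigma_linear, Rmax_left by lra.
    field; split; lra. }
  replace (k * (ln w0 + 1)) with (k * (ln w0 + w0 / w0)) by (field; lra).
  apply (is_RInt_derive (fun s => k * (ln s + w0 / s)));
    intros s Hs; rewrite Rmin_left, Rmax_right in Hs by lra.
  - auto_derive; [repeat split; lra | field; lra].
  - apply (@ex_derive_continuous R_AbsRing R_NormedModule).
    auto_derive; repeat split; try lra; nra.
Qed.

Lemma theta_linear_tax_below (w : R) : w <= w0 -> theta tau sigma w = 1.
Proof.
  intros Hw; unfold theta; fold (drift_ratio tau sigma).
  rewrite (is_RInt_gen_unique (V := R_CompleteNormedModule) _ _
             (is_RInt_gen_linear_tax_below w Hw)).
  rewrite Ropp_0; apply exp_0.
Qed.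

Lemma theta_linear_tax_above (w : R) :
  w0 < w -> theta tau sigma w = exp (- k * (w0 / w - 1)) * Rpower (w / w0) (- k).
Proof.
  intros Hw.
  assert (Hint := is_RInt_gen_Chasles (Fa := Rbar_locally m_infty) _ w0 _ _
                    (is_RInt_gen_linear_tax_below w0 (Rle_refl w0))
                    (proj2 (is_RInt_gen_at_point _ _ _ _) (is_RInt_linear_tax_above w Hw))).
  unfold theta; fold (drift_ratio tau sigma).
  rewrite (is_RInt_gen_unique (V := R_CompleteNormedModule) _ _ Hint).
  unfold Rpower; rewrite <- exp_plus, ln_div by lra.
  change (plus 0 ?u) with (0 + u); f_equal; ring.
Qed.

End LinearTax.

Theorem proposition2 :
  (* General case: f* is f reweighted by theta. *)
  (forall (mu sigma tau f fstar : R -> R),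
      (forall w, continuous mu w) ->
      (forall w, continuous sigma w) ->
      (forall w, continuous tau w) ->
      (forall w, sigma w <> 0) ->
      (forall w, ex_RInt_gen (fun s => 2 * tau s / sigma s ^ 2)
                             (Rbar_locally m_infty) (at_point w)) ->
      steady_state_density mu sigma f ->
      no_flux_at_minus_infty mu sigma f ->
      steady_state_density (fun w => mu w - tau w) sigma fstar ->
      no_flux_at_minus_infty (fun w => mu w - tau w) sigma fstar ->
      exists c : R, 0 < c /\ forall w, fstar w = c * (theta tau sigma w * f w))
  /\
  (* Special case: linear tax above a threshold, sigma(w) = sigma0 * w above it. *)
  (forall (tau0 w0 sigma0 : R) (tau sigma : R -> R),
      0 < w0 -> 0 < sigma0 ->
      (forall w, tau w = tau0 * Rmax (w - w0) 0) ->
      (forall w, w0 <= w -> sigma w = sigma0 * w) ->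
      forall w,
        (w0 < w ->
           theta tau sigma w =
           exp (- (2 * tau0 / sigma0 ^ 2) * (w0 / w - 1))
           * Rpower (w / w0) (- (2 * tau0 / sigma0 ^ 2))) /\
        (w <= w0 -> theta tau sigma w = 1)).
Proof.
  split.
  - intros mu sigma tau f fstar Hmu Hsig Htau Hsig0 Hgen.
    exact (steady_state_density_reweighting mu sigma tau f fstar Hmu Hsig Htau Hsig0 (Hgen 0)).
  - intros tau0 w0 sigma0 tau sigma Hw0 Hsig0 Htau Hsig w; split.
    + exact (theta_linear_tax_above tau0 w0 sigma0 tau sigma Hw0 Hsig0 Htau Hsig w).
    + exact (theta_linear_tax_below tau0 w0 tau sigma Htau w).
Qed.
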